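(* Let $G$ be a complete geometric graph and $B$ a subgraph of $G$. Suppose there exist two vertices $a,b\in V(G)$ and a line $l$ such that (1) $[a,b]\notin E(B)$, and (2) $a$ and all neighbors of $b$ in $B$ lie in one open side $l^{+}$ of $l$, while $b$ and all neighbors of $a$ in $B$ lie in the other open side $l^{-}$ of $l$. Then $B$ is not a blocker for $\mathcal{T}_{\leq 3}(G)$.
   Context: A geometric graph is a graph whose vertices are points in the plane in general position (no three collinear) and whose edges are straight segments between pairs of vertices; $G$ is complete if all pairs of vertices are joined. $[a,b]$ denotes the edge (segment) joining $a$ and $b$. $\mathcal{T}_{\leq k}(G)$ denotes the family of all simple (non-crossing) spanning trees of $G$ of (graph) diameter at most $k$. A subgraph $B$ blocks a family $\mathcal{F}$ of subgraphs if it shares at least one edge with every member of $\mathcal{F}$; a blocker of $\mathcal{F}$ is a subgraph that blocks $\mathcal{F}$ and has the smallest possible number of edges among all subgraphs blocking $\mathcal{F}$. *)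

From mathcomp Require Import all_boot all_order all_algebra.
Set Implicit Arguments. Unset Strict Implicit. Unset Printing Implicit Defensive.
Import Order.TTheory GRing.Theory Num.Theory.
Local Open Scope ring_scope.

Section GeomGraph.
Variables (R : realFieldType) (T : finType) (pos : T -> R * R).

Definition orient (p q r : R * R) : R :=
  (q.1 - p.1) * (r.2 - p.2) - (q.2 - p.2) * (r.1 - p.1).

Definition general_position : Prop :=
  injective pos /\
  forall x y z : T, x != y -> y != z -> x != z -> orient (pos x) (pos y) (pos z) != 0.

(* an edge of the complete graph on T is a 2-element subset of T *)
Definition is_edge (e : {set T}) : bool := #|e| == 2%N.

Definition subgraph_edges (E : {set {set T}}) : Prop := forall e, e \in E -> is_edge e.

Definition on_segment (p q z : R * R) : Prop :=
  exists t : R, 0 <= t <= 1 /\ z = ((1 - t) * p.1 + t * q.1, (1 - t) * p.2 + t * q.2).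

Definition on_edge (e : {set T}) (z : R * R) : Prop :=
  exists x y : T, e = [set x; y] /\ on_segment (pos x) (pos y) z.

(* simple (non-crossing): two distinct edges meet only at common endpoints *)
Definition noncrossing (E : {set {set T}}) : Prop :=
  forall e f, e \in E -> f \in E -> e != f ->
    forall z, on_edge e z -> on_edge f z ->
      exists v, [/\ v \in e, v \in f & z = pos v].

Definition adj (E : {set {set T}}) : rel T := fun u v => [set u; v] \in E.

Definition within (E : {set {set T}}) (k : nat) (u v : T) : Prop :=
  exists s : seq T, [/\ (size s <= k)%N, path (adj E) u s & last u s = v].

Definition connected_graph (E : {set {set T}}) : Prop :=
  forall u v : T, exists k, within E k u v.

Definition acyclic (E : {set {set T}}) : Prop :=
  forall s : seq T, uniq s -> (3 <= size s)%N -> ~ cycle (adj E) s.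

Definition spanning_tree (E : {set {set T}}) : Prop :=
  [/\ subgraph_edges E, connected_graph E & acyclic E].

Definition diam_le (E : {set {set T}}) (k : nat) : Prop :=
  forall u v : T, within E k u v.

(* the family T_{<= k}(G) of simple spanning trees of diameter at most k *)
Definition simple_trees_diam_le (k : nat) (E : {set {set T}}) : Prop :=
  [/\ spanning_tree E, noncrossing E & diam_le E k].

Definition blocks (F : {set {set T}} -> Prop) (B : {set {set T}}) : Prop :=
  forall E, F E -> exists e, e \in B :&: E.

Definition blocker (F : {set {set T}} -> Prop) (B : {set {set T}}) : Prop :=
  [/\ subgraph_edges B, blocks F B &
      forall B', subgraph_edges B' -> blocks F B' -> (#|B| <= #|B'|)%N].

End GeomGraph.

From mathcomp Require Import all_boot all_order all_algebra.
From mathcomp Require Import ring lra.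
Import Order.TTheory GRing.Theory Num.Theory.
Local Open Scope ring_scope.
Set Implicit Arguments. Unset Strict Implicit.

(* Join every vertex other than a and b to a if it lies on the closed side of l
   containing a, and to b otherwise, and join a to b.  This double star has
   diameter 3 and is a simple spanning tree: edges at a common centre only meet
   at that centre (no three points are collinear), and edges at different centres
   lie on different sides of l, except [a,b] which meets the edges at b only in b.
   By hypothesis on the neighbourhoods of a and b in B, none of its edges is in B,
   so B does not even block T_{<=3}(G). *)

Section Segments.
Variable R : realFieldType.

Lemma on_segment_sym (p q z : R * R) : on_segment p q z -> on_segment q p z.
Proof.
case=> t [/andP [t0 t1] ->]; exists (1 - t); split; first by apply/andP; lra.
by congr pair; ring.
Qed.

Lemma on_segment_common_end (h x y z : R * R) :
  orient h x y != 0 -> on_segment h x z -> on_segment h y z -> z = h.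
Proof.
case: h x y => h1 h2 [x1 x2] [y1 y2] hxy [t [_ ->]] [s [_ /= [E1 E2]]].
have e1 : t * (x1 - h1) = s * (y1 - h1) by lra.
have e2 : t * (x2 - h2) = s * (y2 - h2) by lra.
have : t * orient (h1, h2) (x1, x2) (y1, y2) = 0.
  rewrite /orient /=.
  have -> : t * ((x1 - h1) * (y2 - h2) - (x2 - h2) * (y1 - h1)) =
    (t * (x1 - h1)) * (y2 - h2) - (t * (x2 - h2)) * (y1 - h1) by ring.
  by rewrite e1 e2; ring.
move/eqP; rewrite mulf_eq0 (negbTE hxy) orbF => /eqP ->.
by congr pair; ring.
Qed.

Definition lin_form (c1 c2 c0 : R) (p : R * R) : R := c1 * p.1 + c2 * p.2 + c0.

Lemma lin_form_on_segment c1 c2 c0 p q z : on_segment p q z ->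
  exists2 t, 0 <= t <= 1 &
    lin_form c1 c2 c0 z = (1 - t) * lin_form c1 c2 c0 p + t * lin_form c1 c2 c0 q.
Proof. by case=> t [ht ->]; exists t; rewrite // /lin_form /=; ring. Qed.

Lemma on_segment_lin_form_ge0 c1 c2 c0 p q z : on_segment p q z ->
  0 <= lin_form c1 c2 c0 p -> 0 <= lin_form c1 c2 c0 q -> 0 <= lin_form c1 c2 c0 z.
Proof. by case/(lin_form_on_segment c1 c2 c0) => t /andP [t0 t1] -> *; nra. Qed.

Lemma on_segment_lin_form_lt0 c1 c2 c0 p q z : on_segment p q z ->
  lin_form c1 c2 c0 p < 0 -> lin_form c1 c2 c0 q < 0 -> lin_form c1 c2 c0 z < 0.
Proof. by case/(lin_form_on_segment c1 c2 c0) => t /andP [t0 t1] -> *; nra. Qed.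

End Segments.

Lemma on_edge_set2 (R : realFieldType) (T : finType) (pos : T -> R * R) p q z :
  p != q -> on_edge pos [set p; q] z -> on_segment (pos p) (pos q) z.
Proof.
move=> npq [x [y [exy hs]]].
have /set2P [] : x \in [set p; q] by rewrite exy set21.
all: have /set2P [] : y \in [set p; q] by rewrite exy set22.
all: move=> ey ex; subst x y => //.
- by move: npq (set22 p q); rewrite exy !inE orbb eq_sym => /negbTE ->.
- exact: on_segment_sym.
- by move: npq (set21 p q); rewrite exy !inE orbb => /negbTE ->.
Qed.

Section Walks.
Variables (T : finType) (E : {set {set T}}).

Lemma adjC u v : adj E u v = adj E v u.
Proof. by rewrite /adj setUC. Qed.

Lemma within_adj u v : u = v \/ adj E u v -> within E 1 u v.
Proof. by case=> [->|uv]; [exists [::] | exists [:: v]; rewrite /= uv]. Qed.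

Lemma within_trans k1 k2 u w v :
  within E k1 u w -> within E k2 w v -> within E (k1 + k2) u v.
Proof.
case=> s1 [h1 p1 l1] [s2 [h2 p2 l2]].
exists (s1 ++ s2); rewrite size_cat cat_path last_cat l1 p1 p2 l2.
by split; rewrite ?leq_add.
Qed.

End Walks.

Lemma uniq_cycle_neighbours (T : eqType) (e : rel T) (s : seq T) x :
  uniq s -> (3 <= size s)%N -> cycle e s -> x \in s ->
  exists y z, [/\ y != z, e x y & e z x].
Proof.
move=> us hs hc /rot_to [i s' es].
have cyc : cycle e (x :: s') by rewrite -es rot_cycle.
have un : uniq (x :: s') by rewrite -es rot_uniq.
have sz : size (x :: s') = size s by rewrite -es size_rot.
move: sz cyc un {es}; case: s' => [|y s'] sz; first by move: hs; rewrite -sz.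
case/lastP: s' sz => [|t z] sz; first by move: hs; rewrite -sz.
rewrite /= rcons_path last_rcons => /and3P [xy _ zx] /and3P [_ + _].
rewrite mem_rcons inE negb_or => /andP [yz _].
by exists y, z.
Qed.

Section DoubleStar.
Variables (T : finType) (a b : T) (A : pred T).
Hypothesis neq_ab : a != b.

Definition star_hub (v : T) : T := if (v == b) || A v then a else b.

Definition double_star : {set {set T}} :=
  [set [set star_hub v; v] | v in [set v | v != a]].

Lemma star_hub_ab v : star_hub v = a \/ star_hub v = b.
Proof. by rewrite /star_hub; case: ifP; [left | right]. Qed.

Lemma star_hub_b : star_hub b = a.
Proof. by rewrite /star_hub eqxx. Qed.

Lemma star_hub_neq v : v != a -> star_hub v != v.
Proof.
move=> va; rewrite /star_hub; case: (eqVneq v b) => [vb|vb] /=; first by rewrite vb.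
by case: ifP; rewrite eq_sym.
Qed.

Lemma double_starP e :
  reflect (exists2 v, v != a & e = [set star_hub v; v]) (e \in double_star).
Proof.
apply: (iffP imsetP) => [[v] | [v va ->]]; last by exists v; rewrite ?inE.
by rewrite inE => va ->; exists v.
Qed.

Lemma adj_star_hub v : v != a -> adj double_star v (star_hub v).
Proof. by move=> va; rewrite /adj setUC; apply/double_starP; exists v. Qed.

Lemma adj_double_star_leaf x w :
  x != a -> x != b -> adj double_star x w -> w = star_hub x.
Proof.
move=> xa xb /double_starP [v va exw].
have /set2P [xv|xv] : x \in [set star_hub v; v] by rewrite -exw set21.
  by case: (star_hub_ab v) => hv; move: xa xb; rewrite xv hv eqxx.
subst v; have /set2P [|wx] // : w \in [set star_hub x; x] by rewrite -exw set22.
have : star_hub x \in [set x; x] by move: exw; rewrite wx => ->; rewrite set21.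
by rewrite !inE orbb (negbTE (star_hub_neq xa)).
Qed.

Lemma double_star_subgraph : subgraph_edges double_star.
Proof.
move=> e /double_starP [v va ->].
by rewrite /is_edge cards2 star_hub_neq.
Qed.

Lemma double_star_diam : diam_le double_star 3.
Proof.
have near_centre u : exists2 h, h \in [:: a; b] & u = h \/ adj double_star u h.
  case: (eqVneq u a) => [->|ua]; first by exists a; [rewrite mem_head | left].
  exists (star_hub u); last by right; exact: adj_star_hub.
  by case: (star_hub_ab u) => ->; rewrite !inE eqxx ?orbT.
have adj_ab : adj double_star a b by rewrite adjC -{1}star_hub_b adj_star_hub // eq_sym.
move=> u v; have [p hp up] := near_centre u; have [q hq vq] := near_centre v.
have pq : within double_star 1 p q.
  apply: within_adj; move: hp hq; rewrite !inE.
  by case/orP=> /eqP ->; case/orP=> /eqP ->; auto; rewrite adjC; auto.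
have qv : within double_star 1 q v.
  by apply: within_adj; case: vq => [->|]; [left | right; rewrite adjC].
exact: within_trans (within_trans (within_adj up) pq) qv.
Qed.

Lemma double_star_acyclic : acyclic double_star.
Proof.
move=> s us hs hc.
have [x xs /andP [xa xb]] : exists2 x, x \in s & (x != a) && (x != b).
  apply/hasP; apply: contraLR hs => /hasPn sab; rewrite -leqNgt.
  apply: (uniq_leq_size (s2 := [:: a; b])) => // w /sab.
  by rewrite !inE negb_and !negbK orbC.
have [y [z [yz xy zx]]] := uniq_cycle_neighbours us hs hc xs.
rewrite adjC in zx.
by move: yz; rewrite (adj_double_star_leaf xa xb xy) (adj_double_star_leaf xa xb zx) eqxx.
Qed.

Lemma double_star_spanning_tree : spanning_tree double_star.
Proof.
split; [exact: double_star_subgraph | | exact: double_star_acyclic].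
by move=> u v; exists 3%N; apply: double_star_diam.
Qed.

Lemma double_star_avoid (B : {set {set T}}) :
  [set a; b] \notin B -> (forall v, [set a; v] \in B -> ~~ A v) ->
  (forall v, [set b; v] \in B -> A v) ->
  forall e, e \in double_star -> e \notin B.
Proof.
move=> abB a_nbrs b_nbrs e /double_starP [v va ->]; rewrite /star_hub.
case: (eqVneq v b) => [->|vb] //=; case: ifP => Av.
  by apply: contraTN Av; exact: a_nbrs.
by apply: contraFN Av; exact: b_nbrs.
Qed.

End DoubleStar.

Section SeparatedDoubleStar.
Variables (R : realFieldType) (T : finType) (pos : T -> R * R).
Variables (a b : T) (c1 c2 c0 : R).
Hypothesis no3collinear :
  forall x y z : T, x != y -> y != z -> x != z -> orient (pos x) (pos y) (pos z) != 0.
Hypothesis side_a : 0 <= lin_form c1 c2 c0 (pos a).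
Hypothesis side_b : lin_form c1 c2 c0 (pos b) < 0.

Let f v := lin_form c1 c2 c0 (pos v).
Local Notation hub := (star_hub a b [pred v | 0 <= f v]).

Lemma separated_centres : a != b.
Proof. by apply: contraTneq side_b => <-; rewrite -leNgt. Qed.

Lemma star_edges_same_hub_meet x y z : x != a -> y != a -> x != y ->
  hub x = hub y -> on_segment (pos (hub x)) (pos x) z ->
  on_segment (pos (hub y)) (pos y) z -> z = pos (hub x).
Proof.
move=> xa ya xy hxy sx sy; rewrite hxy in sx *.
apply: on_segment_common_end sx sy; apply: no3collinear => //.
  by rewrite -hxy star_hub_neq ?separated_centres.
by rewrite star_hub_neq ?separated_centres.
Qed.

Lemma star_edges_cross_hub_meet x y z : y != a ->
  hub x = a -> hub y = b -> on_segment (pos a) (pos x) z ->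
  on_segment (pos b) (pos y) z -> x = b /\ z = pos b.
Proof.
move=> ya hx; rewrite /star_hub; case: ifP => [_ ab|].
  by move: separated_centres; rewrite ab eqxx.
move=> /negbT /norP [yb]; rewrite -ltNge => fy _ sx sy.
case: (eqVneq x b) => [xb|xb].
  split=> //; subst x; apply: on_segment_common_end (on_segment_sym sx) sy.
  by apply: no3collinear; rewrite 1?eq_sym // separated_centres.
move: hx; rewrite /star_hub (negbTE xb) /=; case: ifP => [fx _|_ ab]; last first.
  by move: separated_centres; rewrite ab eqxx.
have := on_segment_lin_form_lt0 sy side_b fy.
by rewrite ltNge (on_segment_lin_form_ge0 sx side_a fx).
Qed.

Lemma separated_double_star_noncrossing :
  noncrossing pos (double_star a b [pred v | 0 <= f v]).
Proof.
move=> e g /double_starP [x xa ->] /double_starP [y ya ->] exy z.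
move=> /(on_edge_set2 (star_hub_neq _ separated_centres xa)) sx
  /(on_edge_set2 (star_hub_neq _ separated_centres ya)) sy.
have xy : x != y by apply: contraNneq exy => ->.
case: (eqVneq (hub x) (hub y)) => [hxy|hxy].
  exists (hub x); rewrite set21 hxy set21 -hxy.
  by split=> //; apply: star_edges_same_hub_meet sx sy.
case: (star_hub_ab a b [pred v | 0 <= f v] x) => hx;
  case: (star_hub_ab a b [pred v | 0 <= f v] y) => hy;
  rewrite ?hx ?hy in hxy sx sy *.
- by rewrite eqxx in hxy.
- have [xb zb] := star_edges_cross_hub_meet ya hx hy sx sy.
  by exists b; rewrite xb set22 set21.
- have [yb zb] := star_edges_cross_hub_meet xa hy hx sy sx.
  by exists b; rewrite yb set21 set22.
- by rewrite eqxx in hxy.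
Qed.

End SeparatedDoubleStar.

Theorem mainTheorem7 (R : realFieldType) (T : finType) (pos : T -> R * R)
  (B : {set {set T}}) (a b : T) (c1 c2 c0 : R) :
  general_position pos ->
  subgraph_edges B ->
  (c1, c2) != (0, 0) ->
  [set a; b] \notin B ->
  0 < c1 * (pos a).1 + c2 * (pos a).2 + c0 ->
  (forall v, [set b; v] \in B -> 0 < c1 * (pos v).1 + c2 * (pos v).2 + c0) ->
  c1 * (pos b).1 + c2 * (pos b).2 + c0 < 0 ->
  (forall v, [set a; v] \in B -> c1 * (pos v).1 + c2 * (pos v).2 + c0 < 0) ->
  ~ blocker (simple_trees_diam_le pos 3) B.
Proof.
move=> [_ no3collinear] _ _ abB /ltW side_a b_nbrs side_b a_nbrs [_ blocks_B _].
pose A := [pred v | 0 <= lin_form c1 c2 c0 (pos v)].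
have neq_ab : a != b := separated_centres side_a side_b.
have tree : simple_trees_diam_le pos 3 (double_star a b A).
  split; first exact: double_star_spanning_tree.
    exact: separated_double_star_noncrossing.
  exact: double_star_diam.
have [e] := blocks_B _ tree; rewrite inE => /andP [eB eE].
suff : e \notin B by rewrite eB.
apply: (double_star_avoid abB) eE => v.
  by move/a_nbrs; rewrite /= -ltNge.
by move/b_nbrs/ltW.
Qed.
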